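(* Let $d\geq 0$ and $0<i\leq d+1$ be integers, and write $d+1=qi+r$ with integers $q\geq 0$, $1\leq r\leq i$. Let $\Delta\in\mathcal{C}(i,d)$. Then $f_0(\Delta)\geq f_0(S(i,d))=q(i+1)+r+1$.
   Context: All simplicial complexes are finite abstract simplicial complexes; $f_j(\Delta)$ denotes the number of $j$-dimensional faces of $\Delta$. A set $F$ of vertices is a missing face of $\Delta$ if $F\notin\Delta$ but every proper subset of $F$ is in $\Delta$; its dimension is $|F|-1$. $\mathcal{C}(i,d)$ denotes the family of $d$-dimensional simplicial complexes $\Delta$ with $\tilde H_d(\Delta;\mathbb{Z})\neq 0$ (reduced homology) and with no missing faces of dimension $>i$. For integers $d\geq 0$, $i>0$ with $d+1=qi+r$ ($q\geq 0$, $1\leq r\leq i$), $S(i,d)$ is the simplicial join of $q$ copies of $\partial\sigma^i$ and one copy of $\partial\sigma^r$ on pairwise disjoint vertex sets, where $\partial\sigma^k$ is the boundary complex of the $k$-simplex. *)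

From HB Require Import structures.
From mathcomp Require Import all_boot all_order all_algebra.
Set Implicit Arguments. Unset Strict Implicit. Unset Printing Implicit Defensive.
Import Order.TTheory GRing.Theory Num.Theory.

Section Complexes.
Variable n : nat.
Notation face := {set 'I_n}.

Definition is_complex (D : {set face}) : Prop :=
  set0 \in D /\ forall F G : face, F \in D -> G \subset F -> G \in D.

Definition has_dim (D : {set face}) (d : nat) : Prop :=
  (exists2 F, F \in D & #|F| = d.+1) /\ (forall F, F \in D -> #|F| <= d.+1)%N.

Definition f0 (D : {set face}) : nat := #|[set v : 'I_n | [set v] \in D]|.

Definition missing_face (D : {set face}) (F : face) : Prop :=
  F \notin D /\ forall G : face, G \proper F -> G \in D.

(* simplicial boundary of a k-chain c (a Z-valued function on faces; only its
   values on k-faces, i.e. faces with k+1 vertices, matter).  Orientation is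
   induced by the order on 'I_n: removing v from F gets sign
   (-1)^(number of vertices of F below v).  For k = 0 this is the augmentation
   to the (-1)-chains supported on the empty face (reduced homology). *)
Definition bd (D : {set face}) (k : nat) (c : face -> int) (G : face) : int :=
  (\sum_(F in D | #|F| == k.+1)
     \sum_(v in F | G == F :\ v) (-1) ^+ #|[set u in F | (val u < val v)%N]| * c F)%R.

Definition red_hom_nonzero (D : {set face}) (k : nat) : Prop :=
  exists z : face -> int,
    [/\ (forall F, z F != 0%R -> F \in D /\ #|F| = k.+1),
        (forall G, bd D k z G = 0%R)
      & ~ (exists b : face -> int, forall G, bd D k.+1 b G = z G)]
    /\ exists F, z F != 0%R.

Definition in_C (i d : nat) (D : {set face}) : Prop :=
  [/\ is_complex D, has_dim D d, red_hom_nonzero D d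
    & forall F, missing_face D F -> (#|F|.-1 <= i)%N].
End Complexes.

(* S(i,d) for d+1 = q*i + r: join of q copies of the boundary of the i-simplex
   (blocks of i+1 vertices) and one copy of the boundary of the r-simplex
   (last block of r+1 vertices), on the vertex set 'I_(q*(i+1) + (r+1)).
   Vertex v lies in block minn (v / (i+1)) q; a face of the join is a set of
   vertices containing no full block. *)
Definition Sblock (q i r : nat) (v : 'I_(q * i.+1 + r.+1)) : nat :=
  minn (v %/ i.+1) q.

Definition S_complex (q i r : nat) : {set {set 'I_(q * i.+1 + r.+1)}} :=
  [set F : {set 'I_(q * i.+1 + r.+1)} | [forall b : 'I_q.+1,
             ~~ ([set v | Sblock v == val b] \subset F)]].

From HB Require Import structures.
From mathcomp Require Import all_boot all_order all_algebra.
From mathcomp Require Import zify.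
Set Implicit Arguments. Unset Strict Implicit. Unset Printing Implicit Defensive.

(* Only two consequences of the hypotheses are used: D is closed under subsets
   and every missing face has at most i+1 vertices, and the support S of a
   nonzero d-cycle is "ridge-shared": every codimension-one face F \ x of a
   member F of S lies in another member of S (otherwise the boundary would be
   nonzero at F \ x).

   We prove a statement about links, by induction on q.  Let s be a face and S
   a nonempty ridge-shared family of faces with q*i + r vertices, disjoint from
   s, whose union with s lies in D, and such that |s| + q*i + r is the maximal
   face size.  Then the link of s has at least q(i+1) + r + 1 vertices.
   For q = 0 a member of S together with a vertex of a neighbouring member
   gives r + 1 link vertices.  For q > 0 take v in F0 in S and a neighbour F of
   F0 across F0 \ v.  Then v + F + s is too large to be a face, so it contains
   a missing face G, necessarily through v; extending G \ v \ s inside F gives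
   an i-set C that blocks v, i.e. v is not in the link of s + C.  The members
   of S containing C, with C removed, satisfy the induction hypothesis for the
   face s + C, and the link of s contains v, C and the link of s + C, which
   are pairwise disjoint.  The theorem is the case s = empty face.  Finally
   S(i,d) has every vertex, as each block of the join has at least two. *)

Section FiniteSets.
Variable T : finType.
Implicit Types A B C F : {set T}.

Lemma cardsU_disjoint A B : [disjoint A & B] -> #|A :|: B| = #|A| + #|B|.
Proof. by move=> AB; rewrite cardsU disjoint_setI0 // cards0 subn0. Qed.

Lemma extend_inside A B j : A \subset B -> #|A| + j <= #|B| ->
  exists C, [/\ A \subset C, C \subset B & #|C| = #|A| + j].
Proof.
move=> AB; elim: j => [|j IHj] room; first by exists A; rewrite subxx AB addn0.
have room' : #|A| + j <= #|B| by apply: leq_trans room; rewrite addnS.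
have [C [AC CB cardC]] := IHj room'.
have /subsetPn[y yB yC] : ~~ (B \subset C).
  by apply: contraTN room => /subset_leq_card; rewrite cardC addnS -ltnNge.
exists (y |: C); split; last by rewrite cardsU1 yC cardC addnS.
- exact: subset_trans AC (subsetUr _ _).
- by rewrite subUset sub1set yB CB.
Qed.

Lemma ridge_neighbour F F' x : x \in F -> F :\ x \subset F' ->
  #|F'| = #|F| -> F' != F -> x \notin F' /\ exists2 w, w \in F' & w \notin F.
Proof.
move=> xF ridge cardF' neq; split.
  apply: contra neq => xF'; rewrite eq_sym eqEcard cardF' leqnn andbT.
  by rewrite -(setD1K xF) subUset sub1set xF' ridge.
have /subsetPn[w wF' wF] : ~~ (F' \subset F).
  by apply: contra neq => F'F; rewrite eqEcard F'F cardF' leqnn.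
by exists w.
Qed.

(* A family of sets is ridge-shared if every face F \ x of a member F lies in
   some other member; this is the combinatorial shadow of being a cycle. *)
Definition ridge_shared (S : {set {set T}}) : Prop :=
  forall F x, F \in S -> x \in F ->
  exists F', [/\ F' \in S, F' != F & F :\ x \subset F'].

End FiniteSets.

Section Link.
Variables (n : nat) (D : {set {set 'I_n}}).
Hypothesis down : forall F G : {set 'I_n}, F \in D -> G \subset F -> G \in D.
Implicit Types (s C F G : {set 'I_n}) (S : {set {set 'I_n}}).

Definition link_vertices s : {set 'I_n} := [set u | (u \notin s) && (u |: s \in D)].

Definition link_family s k S : Prop :=
  forall F, F \in S -> [/\ #|F| = k, [disjoint F & s] & F :|: s \in D].

Lemma link_family_vertices s k S F u :
  link_family s k S -> F \in S -> u \in F -> u \in link_vertices s.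
Proof.
move=> famS FS uF; have [_ Fs FsD] := famS F FS.
rewrite inE (disjointFr Fs uF) /=.
by apply: down FsD _; rewrite setSU // sub1set.
Qed.

Lemma link_vertices_sub s C : link_vertices (s :|: C) \subset link_vertices s.
Proof.
apply/subsetP => u; rewrite !inE negb_or => /andP[/andP[us _] usC].
by rewrite us; apply: down usC _; rewrite setUS // subsetUl.
Qed.

Definition star S C : {set {set 'I_n}} :=
  [set F :\: C | F in [set F in S | C \subset F]].

Lemma star_link_family s k S C :
  link_family s k S -> link_family (s :|: C) (k - #|C|) (star S C).
Proof.
move=> famS G /imsetP[F]; rewrite inE => /andP[FS CF] -> {G}.
have [cardF Fs FsD] := famS F FS.
split.
- by rewrite cardsD (setIidPr CF) cardF.
- rewrite disjoints_subset setCU subsetI -disjoints_subset.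
  by rewrite (disjointWl (subsetDl F C) Fs) setDE subsetIr.
- suff -> : F :\: C :|: (s :|: C) = F :|: s by [].
  apply/setP => u; rewrite !inE.
  by have [/(subsetP CF) -> | uC] := boolP (u \in C); rewrite ?orbT //= orbF.
Qed.

(* Stars inherit ridge-sharing: the neighbour of F across F \ x, x not in C,
   still contains C. *)
Lemma star_ridge_shared S C : ridge_shared S -> ridge_shared (star S C).
Proof.
move=> shS G x /imsetP[F]; rewrite inE => /andP[FS CF] -> {G}.
rewrite inE => /andP[xC xF].
have [F' [F'S neq ridge]] := shS F x FS xF.
have CF' : C \subset F'.
  apply: subset_trans ridge; apply/subsetP => u uC.
  by rewrite !inE (subsetP CF u uC) andbT; apply: contraNneq xC => <-.
exists (F' :\: C); split.
- by apply/imsetP; exists F' => //; rewrite inE F'S CF'.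
- apply: contra neq => /eqP eqD.
  by rewrite -(setID F' C) -(setID F C) (setIidPr CF') (setIidPr CF) eqD.
- by rewrite setDDl setUC -setDDl setSD.
Qed.

Lemma link_card_base s r S F0 :
  0 < r -> link_family s r S -> ridge_shared S -> F0 \in S ->
  r.+1 <= #|link_vertices s|.
Proof.
move=> r_gt0 famS shS F0S; have [cardF0 _ _] := famS F0 F0S.
have /set0Pn[x xF0] : F0 != set0 by rewrite -card_gt0 cardF0.
have [F [FS neq ridge]] := shS F0 x F0S xF0.
have [cardF _ _] := famS F FS.
have [_ [w wF wF0]] := ridge_neighbour xF0 ridge (etrans cardF (esym cardF0)) neq.
have <- : #|w |: F0| = r.+1 by rewrite cardsU1 wF0 cardF0.
apply/subset_leq_card/subsetP => u /setU1P[-> | uF0].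
- exact: link_family_vertices famS FS wF.
- exact: link_family_vertices famS F0S uF0.
Qed.

Lemma missing_face_sub X : X \notin D ->
  exists2 G : {set 'I_n}, G \subset X & missing_face D G.
Proof.
move=> XD.
have exG : exists k, [exists G : {set 'I_n}, [&& G \subset X, G \notin D & #|G| == k]].
  by exists #|X|; apply/existsP; exists X; rewrite subxx XD eqxx.
case: (ex_minnP exG) => k /existsP[G /and3P[GX GD /eqP cardG]] minG.
exists G => //; split => // G' G'G; apply: contraT => G'D.
suff : #|G| <= #|G'| by rewrite leqNgt proper_card.
rewrite cardG; apply: minG.
by apply/existsP; exists G'; rewrite G'D (subset_trans (proper_sub G'G) GX) eqxx.
Qed.

Variables (i m : nat).
Hypothesis missing_small : forall G, missing_face D G -> #|G|.-1 <= i.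
Hypothesis faces_small : forall F, F \in D -> #|F| <= m.

Lemma blocking_set s k S F0 v :
  link_family s k S -> ridge_shared S -> #|s| + k = m -> i <= k ->
  F0 \in S -> v \in F0 ->
  exists2 F : {set 'I_n}, F \in S &
    exists2 C : {set 'I_n}, C \subset F &
      [/\ #|C| = i, v \notin F & v \notin link_vertices (s :|: C)].
Proof.
move=> famS shS size_max ik F0S vF0.
have [F [FS neq ridge]] := shS F0 v F0S vF0.
have [cardF0 F0s _] := famS F0 F0S; have [cardF Fs FsD] := famS F FS.
have [vF _] := ridge_neighbour vF0 ridge (etrans cardF (esym cardF0)) neq.
have vs : v \notin s by rewrite (disjointFr F0s vF0).
have [G GX missG] : exists2 G : {set 'I_n}, G \subset v |: (F :|: s) & missing_face D G.
  apply: missing_face_sub; apply/negP => /faces_small.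
  by rewrite cardsU1 inE negb_or vF vs cardsU_disjoint // cardF; lia.
have vG : v \in G.
  have [GD _] := missG; apply: contraR GD => vG.
  apply: down FsD _; apply/subsetP => u uG.
  have /setU1P[uv | //] := subsetP GX u uG.
  by rewrite -uv uG in vG.
set tau := (G :\ v) :\: s.
have tauF : tau \subset F.
  apply/subsetP => u; rewrite !inE => /andP[us /andP[uv uG]].
  by have := subsetP GX u uG; rewrite !inE (negbTE uv) (negbTE us) orbF.
have card_tau : #|tau| <= i.
  apply: leq_trans (missing_small missG).
  by rewrite (leq_trans (subset_leq_card (subsetDl _ _))) // (cardsD1 v G) vG.
have [C [tauC CF cardC]] : exists C : {set 'I_n}, [/\ tau \subset C, C \subset F & #|C| = i].
  by rewrite -(subnKC card_tau); apply: extend_inside; rewrite ?subnKC ?cardF.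
exists F => //; exists C => //; split => //.
rewrite inE negb_and; apply/orP; right; case: missG => GD _; apply: contra GD.
move=> /down; apply; apply/subsetP => u uG; rewrite !inE.
case: (u =P v) => //= /eqP uv; case: (boolP (u \in s)) => //= us.
by apply: (subsetP tauC); rewrite !inE us uv uG.
Qed.

Lemma link_card q r s S :
  0 < r <= i -> #|s| + (q * i + r) = m ->
  link_family s (q * i + r) S -> ridge_shared S -> (exists F : {set 'I_n}, F \in S) ->
  q * i.+1 + r + 1 <= #|link_vertices s|.
Proof.
elim: q r s S => [|q IHq] r s S /andP[r_gt0 r_le_i] size_max famS shS [F0 F0S].
  by rewrite !mul0n !add0n addn1; apply: link_card_base famS shS F0S.
have [cardF0 _ _] := famS F0 F0S.
have /set0Pn[v vF0] : F0 != set0 by rewrite -card_gt0 cardF0; lia.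
have i_le : i <= q.+1 * i + r by lia.
have [F FS [C CF [cardC vF v_blocked]]] := blocking_set famS shS size_max i_le F0S vF0.
have sizeC : q.+1 * i + r - #|C| = q * i + r by rewrite cardC; lia.
have famC := star_link_family (C := C) famS; rewrite sizeC in famC.
have Cs : [disjoint C & s].
  by have [_ Fs _] := famS F FS; apply: disjointWl CF Fs.
have link_sC : q * i.+1 + r + 1 <= #|link_vertices (s :|: C)|.
  apply: (IHq r _ _ _ _ famC (star_ridge_shared (C := C) shS)).
  - by rewrite r_gt0.
  - by rewrite cardsU_disjoint 1?disjoint_sym // cardC -size_max; lia.
  - by exists (F :\: C); apply/imsetP; exists F; rewrite // inE FS CF.
have C_link : [disjoint C & link_vertices (s :|: C)].
  by rewrite disjoints_subset; apply/subsetP => u uC; rewrite !inE uC orbT.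
have vC : v \notin C by apply: contra vF; apply: (subsetP CF).
have sub : v |: (C :|: link_vertices (s :|: C)) \subset link_vertices s.
  rewrite subUset sub1set (link_family_vertices famS F0S vF0) /= subUset.
  rewrite link_vertices_sub andbT; apply/subsetP => u uC.
  exact: link_family_vertices famS FS (subsetP CF u uC).
apply: leq_trans (subset_leq_card sub).
rewrite cardsU1 inE negb_or vC v_blocked cardsU_disjoint // cardC; lia.
Qed.

End Link.

(* The support of a k-cycle is ridge-shared: if F \ x were a face of no other
   member of the support, the boundary at F \ x would be +-z(F) <> 0. *)
Lemma cycle_support_ridge_shared n (D : {set {set 'I_n}}) k (z : {set 'I_n} -> int) :
  (forall F, z F != 0%R -> F \in D /\ #|F| = k.+1) ->
  (forall G, bd D k z G = 0%R) ->
  ridge_shared [set F | z F != 0%R].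
Proof.
move=> supp cyc F x; rewrite inE => zF xF; have [FD cardF] := supp F zF.
have [/existsP[F' /and3P[zF' neq ridge]] | alone] :=
  boolP [exists F' : {set 'I_n}, [&& z F' != 0%R, F' != F & F :\ x \subset F']].
  by exists F'; rewrite inE zF' neq ridge.
suff : bd D k z (F :\ x) != 0%R by rewrite cyc eqxx.
rewrite /bd (bigD1 F) /=; last by rewrite FD cardF eqxx.
rewrite [X in (_ + X)%R]big1 ?GRing.addr0; last first.
  move=> F' /andP[_ neq]; apply: big1 => u /andP[uF' /eqP ridge].
  have [-> | zF'] := eqVneq (z F') 0%R; first by rewrite GRing.mulr0.
  by case/negP: alone; apply/existsP; exists F'; rewrite zF' neq ridge subsetDl.
rewrite (big_pred1 x) => [|u /=]; first by rewrite GRing.mulf_eq0 GRing.signr_eq0.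
apply/andP/eqP => [[uF /eqP ridge] | ->]; last by rewrite xF eqxx.
apply/eqP/negPn/negP => ux.
have : u \in F :\ x by rewrite !inE ux uF.
by rewrite ridge setD11.
Qed.

(* Each block of the join S(i,d) has at least two vertices (i, r > 0), so no
   block lies inside a single vertex and every vertex is a face. *)
Lemma f0_S_complex q i r : 0 < i -> 0 < r ->
  f0 (S_complex q i r) = q * i.+1 + r + 1.
Proof.
move=> i_gt0 r_gt0; rewrite /f0.
suff -> : [set v | [set v] \in S_complex q i r] = setT.
  by rewrite cardsT card_ord addn1 addnS.
apply/setP => v; rewrite !inE; apply/forallP => b.
have b_start : b * i.+1 <= q * i.+1 by rewrite leq_mul2r -ltnS ltn_ord orbT.
have mem_block e (lt_e : b * i.+1 + e < q * i.+1 + r.+1) :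
    e <= i -> Ordinal lt_e \in [set u | Sblock u == val b].
  move=> e_le_i; rewrite inE /Sblock /= divnMDl // divn_small // addn0.
  by apply/eqP/minn_idPl; rewrite -ltnS.
have lt0 : b * i.+1 + 0 < q * i.+1 + r.+1 by lia.
have lt1 : b * i.+1 + 1 < q * i.+1 + r.+1 by lia.
apply/negP => /subsetP block_sub.
have := block_sub _ (mem_block 0 lt0 (leq0n _)).
have := block_sub _ (mem_block 1 lt1 i_gt0).
by rewrite !inE => /eqP <- /eqP /(congr1 val) /= /eqP; rewrite eqn_add2l.
Qed.

Theorem theorem1p1 (n d i q r : nat) (D : {set {set 'I_n}}) :
  (0 < i)%N -> (i <= d.+1)%N -> d.+1 = (q * i + r)%N -> (1 <= r <= i)%N ->
  in_C i d D ->
  (f0 (S_complex q i r) <= f0 D)%N /\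
  f0 (S_complex q i r) = (q * i.+1 + r + 1)%N.
Proof.
move=> i_gt0 _ d_eq r_range [[_ down] [_ faces_small] [z [[supp cyc _] [F1 zF1]]] missing_small].
have r_gt0 : 0 < r by case/andP: r_range.
rewrite f0_S_complex //; split => //.
have -> : f0 D = #|link_vertices D set0|.
  by rewrite /f0; apply: eq_card => u; rewrite !inE setU0.
apply: (link_card down missing_small faces_small (s := set0)
         (S := [set F | z F != 0%R])) => //.
- by rewrite cards0 add0n.
- move=> F; rewrite inE => /supp[FD cardF].
  by rewrite cardF d_eq setU0 disjoints_subset setC0 subsetT.
- exact: cycle_support_ridge_shared supp cyc.
- by exists F1; rewrite inE.
Qed.
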